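(* Let $G$ be a simplicial group and $c\in C_n(EG)$. (i) For any $0\le k\le n+1$, $P^{n+1}_k(Sc)=e_0\otimes Sc$ if $k=0$, and $P^{n+1}_k(Sc)=(S\otimes1)P^n_{k-1}(c)$ if $k>0$. (ii) $\Delta\,Sc=(S\otimes1)\,\Delta c+e_0\otimes Sc$.
   Context: Chains are normalized, with Alexander–Whitney diagonal $\Delta$. $EG$ is the simplicial set with $p$-simplices $(g_p,[g_{p-1},\dots,g_0])\in G_p\times G_{p-1}\times\dots\times G_0$, faces $\partial_k(g_p,[g_{p-1},\dots,g_0])=(\partial_kg_p,[\partial_{k-1}g_{p-1},\dots,\partial_1g_{p-k+1},(\partial_0g_{p-k})g_{p-k-1},g_{p-k-2},\dots,g_0])$ (for $k=0$: $((\partial_0g_p)g_{p-1},[g_{p-2},\dots,g_0])$; for $k=p$: $(\partial_pg_p,[\partial_{p-1}g_{p-1},\dots,\partial_1g_1])$) and degeneracies $s_k(g_p,[\dots])=(s_kg_p,[s_{k-1}g_{p-1},\dots,s_0g_{p-k},1_{p-k},g_{p-k-1},\dots,g_0])$; $e_0=(1_0,[\,])$. $S\colon EG_p\to EG_{p+1}$, $S(g_p,[g_{p-1},\dots,g_0])=(1_{p+1},[g_p,g_{p-1},\dots,g_0])$, extended linearly to $C(EG)$. $P^n_k\colon C_n\to C_k\otimes C_{n-k}$, $\sigma\mapsto\sigma(0,\dots,k)\otimes\sigma(k,\dots,n)$. *)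

From mathcomp Require Import all_boot all_algebra.
Unset Strict Implicit. Unset Printing Implicit Defensive.
Import GRing.Theory.
Local Open Scope ring_scope.

Record simplicial_group := SimplicialGroup {
  sg_car :> nat -> Type;
  sg_mul : forall p, sg_car p -> sg_car p -> sg_car p;
  sg_one : forall p, sg_car p;
  sg_inv : forall p, sg_car p -> sg_car p;
  sg_mulA : forall p (x y z : sg_car p),
      sg_mul p x (sg_mul p y z) = sg_mul p (sg_mul p x y) z;
  sg_mul1g : forall p (x : sg_car p), sg_mul p (sg_one p) x = x;
  sg_mulVg : forall p (x : sg_car p), sg_mul p (sg_inv p x) x = sg_one p;
  sg_d : forall p, nat -> sg_car p.+1 -> sg_car p;
  sg_s : forall p, nat -> sg_car p -> sg_car p.+1;
  sg_dM : forall p i (x y : sg_car p.+1), (i <= p.+1)%N ->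
      sg_d p i (sg_mul _ x y) = sg_mul _ (sg_d p i x) (sg_d p i y);
  sg_sM : forall p i (x y : sg_car p), (i <= p)%N ->
      sg_s p i (sg_mul _ x y) = sg_mul _ (sg_s p i x) (sg_s p i y);
  sg_dd : forall p i j (x : sg_car p.+2), (i < j)%N -> (j <= p.+2)%N ->
      sg_d p i (sg_d p.+1 j x) = sg_d p j.-1 (sg_d p.+1 i x);
  sg_ds_lt : forall p i j (x : sg_car p.+1), (i < j)%N -> (j <= p.+1)%N ->
      sg_d p.+1 i (sg_s p.+1 j x) = sg_s p j.-1 (sg_d p i x);
  sg_ds_eq : forall p j (x : sg_car p), (j <= p)%N -> sg_d p j (sg_s p j x) = x;
  sg_ds_eqS : forall p j (x : sg_car p), (j <= p)%N -> sg_d p j.+1 (sg_s p j x) = x;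
  sg_ds_gt : forall p i j (x : sg_car p.+1), (j.+1 < i)%N -> (i <= p.+2)%N ->
      sg_d p.+1 i (sg_s p.+1 j x) = sg_s p j (sg_d p i.-1 x);
  sg_ss : forall p i j (x : sg_car p), (i <= j)%N -> (j <= p)%N ->
      sg_s p.+1 i (sg_s p j x) = sg_s p.+1 j.+1 (sg_s p i x)
}.

Arguments sg_mul {s p}.
Arguments sg_one {s}.
Arguments sg_inv {s p}.
Arguments sg_d {s p}.
Arguments sg_s {s p}.

(* The simplicial set EG.  A p-simplex (g_p,[g_{p-1},...,g_0]) is encoded   *)
(* as a dependent family g : forall j, G j whose components of degree > p   *)
(* are 1 (so the encoding is unique).                                       *)
Record EG (G : simplicial_group) (p : nat) := MkEG {
  eg_fun :> forall j, G j;
  eg_top : forall j, (p < j)%N -> eg_fun j = sg_one j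
}.

Arguments MkEG {G p}.
Set Implicit Arguments.

Section EGops.
Variable G : simplicial_group.

(* k-th face  EG_{p+1} -> EG_p :                                            *)
(*  d_k(g_{p+1},[g_p,...,g_0]) =                                            *)
(*   (d_k g_{p+1},[d_{k-1} g_p,...,d_1 g_{p-k+2},(d_0 g_{p-k+1}) g_{p-k},     *)
(*    g_{p-k-1},...,g_0]);  componentwise, in degree j <= p:                  *)
(*   j + k > p : d_{j+k-p} g_{j+1};  j + k = p : (d_0 g_{j+1}) g_j;           *)
(*   j + k < p : g_j.                                                        *)
Definition face_fun (p k : nat) (g : forall j, G j) : forall j, G j :=
  fun j =>
    if (p < j)%N then sg_one j
    else if (p < j + k)%N then sg_d (j + k - p) (g j.+1)
    else if j + k == p then sg_mul (sg_d 0 (g j.+1)) (g j)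
    else g j.

Lemma face_top p k (x : EG G p.+1) j : (p < j)%N -> face_fun p k x j = sg_one j.
Proof. by rewrite /face_fun => ->. Qed.

Definition face (p k : nat) (x : EG G p.+1) : EG G p :=
  MkEG (face_fun p k x) (@face_top p k x).

(* k-th degeneracy EG_p -> EG_{p+1}:                                        *)
(*  s_k(g_p,[...]) = (s_k g_p,[s_{k-1} g_{p-1},...,s_0 g_{p-k},1_{p-k},      *)
(*                    g_{p-k-1},...,g_0]);  componentwise in degree j'<=p+1:  *)
(*   j' + k > p : s_{j'+k-p-1} g_{j'-1};  j' + k = p : 1;  j' + k < p : g_j'. *)
Definition degen_fun (p k : nat) (g : forall j, G j) : forall j, G j :=
  fun j =>
    if (p.+1 < j)%N then sg_one j
    else if (p < j + k)%N then
      match j return G j with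
      | 0 => sg_one 0
      | j'.+1 => sg_s (j'.+1 + k - p.+1) (g j')
      end
    else if j + k == p then sg_one j
    else g j.

Lemma degen_top p k (x : EG G p) j : (p.+1 < j)%N -> degen_fun p k x j = sg_one j.
Proof. by rewrite /degen_fun => ->. Qed.

Definition degen (p k : nat) (x : EG G p) : EG G p.+1 :=
  MkEG (degen_fun p k x) (@degen_top p k x).

Definition degenerate (p : nat) (x : EG G p) : Prop :=
  match p return EG G p -> Prop with
  | 0 => fun _ => False
  | q.+1 => fun x => exists k (y : EG G q), (k <= q)%N /\ degen k y = x
  end x.

(* S : EG_p -> EG_{p+1},  S(g_p,[g_{p-1},...,g_0]) = (1_{p+1},[g_p,...,g_0]) *)
Definition S_fun (p : nat) (g : forall j, G j) : forall j, G j :=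
  fun j => if j == p.+1 then sg_one j else g j.

Lemma S_top p (x : EG G p) j : (p.+1 < j)%N -> S_fun p x j = sg_one j.
Proof.
rewrite /S_fun => h; case: eqP => [->//|_]; apply: eg_top.
exact: ltn_trans (ltnSn p) h.
Qed.

Definition Ssimp (p : nat) (x : EG G p) : EG G p.+1 :=
  MkEG (S_fun p x) (@S_top p x).

Definition one_simplex (p : nat) : EG G p :=
  MkEG (fun j => sg_one j) (fun j _ => erefl).
Definition e0 : EG G 0 := one_simplex 0.

Definition castEG (m n : nat) (h : m = n) (x : EG G m) : EG G n :=
  eq_rect m (EG G) x n h.

(* front face sigma(0,...,k) = d_{k+1} ... d_n sigma  (iterated last faces) *)
Fixpoint front_aux (m k : nat) : EG G (m + k) -> EG G k :=
  match m return EG G (m + k) -> EG G k with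
  | 0 => fun x => x
  | m'.+1 => fun x => @front_aux m' k (face (m' + k).+1 x)
  end.

Definition front (n k : nat) (x : EG G n) : EG G k :=
  (if (k <= n)%N as b return (k <= n)%N = b -> EG G k
   then fun h => @front_aux (n - k) k (castEG (esym (subnK h)) x)
   else fun _ => one_simplex k) erefl.

(* back face sigma(k,...,n) = d_0^k sigma  (iterated 0-th faces) *)
Fixpoint back_aux (k m : nat) : EG G (k + m) -> EG G m :=
  match k return EG G (k + m) -> EG G m with
  | 0 => fun x => x
  | k'.+1 => fun x => @back_aux k' m (face 0 x)
  end.

Definition back (n k : nat) (x : EG G n) : EG G (n - k) :=
  (if (k <= n)%N as b return (k <= n)%N = b -> EG G (n - k)
   then fun h => @back_aux k (n - k) (castEG (esym (subnKC h)) x)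
   else fun _ => one_simplex (n - k)) erefl.

(* Chains.  An n-chain is represented by a formal Z-linear combination of   *)
(* n-simplices; elements of C(EG) (x) C(EG) by formal Z-linear combinations *)
(* of pairs of simplices of arbitrary bidegree (k,l).  Equality in the      *)
(* NORMALIZED tensor product  C^N(EG) (x) C^N(EG) = Z[X x X]/(pairs with a   *)
(* degenerate factor)  is characterized by its universal property: two      *)
(* formal sums are equal iff every bi-additive assignment into an abelian   *)
(* group vanishing on pairs with a degenerate factor takes the same value.  *)
Definition chain (n : nat) := seq (int * EG G n).

Record tgen := TGen { tk : nat; tl : nat; tx : EG G tk; ty : EG G tl }.
Definition tchain := seq (int * tgen).

Definition teval (M : zmodType) (f : forall k l, EG G k -> EG G l -> M)
  (a : tchain) : M :=
  \sum_(t <- a) f _ _ (tx t.2) (ty t.2) *~ t.1.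

Definition tensor_eq (a b : tchain) : Prop :=
  forall (M : zmodType) (f : forall k l, EG G k -> EG G l -> M),
    (forall k l (x : EG G k) (y : EG G l),
        degenerate x \/ degenerate y -> f k l x y = 0) ->
    teval f a = teval f b.

Definition Sch (n : nat) (c : chain n) : chain n.+1 :=
  [seq (t.1, Ssimp t.2) | t <- c].

Definition S_tens (a : tchain) : tchain :=
  [seq (t.1, @TGen (tk t.2).+1 (tl t.2) (Ssimp (tx t.2)) (ty t.2)) | t <- a].

Definition e0_tens (n : nat) (c : chain n) : tchain :=
  [seq (t.1, @TGen 0 n e0 t.2) | t <- c].

Definition P (n k : nat) (c : chain n) : tchain :=
  [seq (t.1, @TGen k (n - k) (front k t.2) (back k t.2)) | t <- c].

Definition AW (n : nat) (c : chain n) : tchain :=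
  flatten [seq P k c | k <- iota 0 n.+1].

End EGops.

From mathcomp Require Import all_boot all_algebra zify.
From Stdlib Require Import FunctionalExtensionality ProofIrrelevance.

(* S prepends an identity entry to a simplex.  It commutes with the last face
   map and is undone by the 0-th face map, so the front face (0..k+1) of S x is
   S applied to the front face (0..k) of x, its back face (k+1..n+1) is the
   back face (k..n) of x, and its front vertex is e_0.  Thus (i) holds already
   between formal sums, and (ii) is (i) summed over k. *)

Section SimplicialGroupUnit.
Variable G : simplicial_group.

Lemma sg_mul_idem p (x : G p) : sg_mul x x = x -> x = sg_one p.
Proof.
move=> xx; have := sg_mulVg _ _ x.
by rewrite -{2}xx sg_mulA sg_mulVg sg_mul1g.
Qed.

Lemma sg_d1 p i : (i <= p.+1)%N -> @sg_d G p i (sg_one p.+1) = sg_one p.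
Proof. by move=> le_ip; apply: sg_mul_idem; rewrite -sg_dM // sg_mul1g. Qed.

End SimplicialGroupUnit.

Section FrontBackFaces.
Variable G : simplicial_group.
Local Notation ef x := (eg_fun _ _ x).

Lemma eq_EG p (x y : EG G p) : (forall j, x j = y j) -> x = y.
Proof.
case: x y => [f f_top] [g g_top] /= fg.
have fg' : f = g by apply: functional_extensionality_dep.
by subst g; rewrite (proof_irrelevance _ f_top g_top).
Qed.

Lemma eg_fun_cast m n (h : m = n) (x : EG G m) : ef (castEG h x) = ef x.
Proof. by case: n / h. Qed.

(* Componentwise versions of [front_aux] and [back_aux], free of the
   dependent degree index. *)
Fixpoint front_fun (m k : nat) (g : forall j, G j) : forall j, G j :=
  if m is m'.+1 then front_fun m' k (face_fun (m' + k) (m' + k).+1 g) else g.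

Fixpoint back_fun (k m : nat) (g : forall j, G j) : forall j, G j :=
  if k is k'.+1 then back_fun k' m (face_fun (k' + m) 0 g) else g.

Lemma eg_fun_front_aux m k (x : EG G (m + k)) :
  ef (@front_aux G m k x) = front_fun m k x.
Proof. by elim: m x => //= m IHm x; rewrite IHm. Qed.

Lemma eg_fun_back_aux k m (x : EG G (k + m)) :
  ef (@back_aux G k m x) = back_fun k m x.
Proof. by elim: k x => //= k IHk x; rewrite IHk. Qed.

Lemma eg_fun_front n k (x : EG G n) :
  (k <= n)%N -> ef (front k x) = front_fun (n - k) k x.
Proof.
move=> le_kn; rewrite /front; move: (erefl (k <= n)%N); rewrite {2 3}le_kn => e.
by rewrite eg_fun_front_aux eg_fun_cast.
Qed.

Lemma eg_fun_back n k (x : EG G n) :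
  (k <= n)%N -> ef (back k x) = back_fun k (n - k) x.
Proof.
move=> le_kn; rewrite /back; move: (erefl (k <= n)%N); rewrite {2 3}le_kn => e.
by rewrite eg_fun_back_aux eg_fun_cast.
Qed.

Lemma face_fun_lastS p (g : forall j, G j) :
  face_fun p.+1 p.+2 (S_fun p.+1 g) = S_fun p (face_fun p p.+1 g).
Proof.
apply: functional_extensionality_dep => j; rewrite /face_fun /S_fun.
case: (ltngtP j p.+1) => [lt_jp | // | ->].
- have -> : (j.+1 == p.+2) = false by rewrite eqSS ltn_eqF.
  have -> : (p.+1 < j + p.+2)%N by lia.
  have -> : (p < j + p.+1)%N by lia.
  by have -> : (j + p.+2 - p.+1 = j + p.+1 - p)%N by lia.
- have -> : (p.+1 < p.+1 + p.+2)%N by lia.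
  by rewrite eqxx sg_d1 // addKn.
Qed.

Lemma face_fun0S p (g : forall j, G j) :
  (forall j, (p < j)%N -> g j = sg_one j) -> face_fun p 0 (S_fun p g) = g.
Proof.
move=> g_top; apply: functional_extensionality_dep => j.
(* [face_fun] mixes [addn] and the ring addition of [nat]. *)
rewrite /face_fun /S_fun addn0 GRing.addr0.
case: (ltngtP p j) => [lt_pj | lt_jp | <-]; first by rewrite g_top.
- by rewrite ltn_eqF // ltnS ltnW.
- by rewrite !eqxx (ltn_eqF (ltnSn p)) sg_d1 // sg_mul1g.
Qed.

Lemma front_funS m k (g : forall j, G j) :
  front_fun m k.+1 (S_fun (m + k) g) = S_fun k (front_fun m k g).
Proof. by elim: m g => //= m IHm g; rewrite addnS addSn face_fun_lastS IHm. Qed.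

Lemma front_fun_last m k (g : forall j, G j) :
  front_fun m.+1 k g = face_fun k k.+1 (front_fun m k.+1 g).
Proof. by elim: m g => //= m IHm g; rewrite -IHm /= addnS addSn. Qed.

Lemma front0_Ssimp n (x : EG G n) : front 0 (Ssimp x) = e0 G.
Proof.
apply: eq_EG => j; rewrite eg_fun_front // subn0 front_fun_last /=.
rewrite -[n in S_fun n]addn0 front_funS /face_fun /S_fun.
by case: j => [|j] //=; rewrite sg_d1.
Qed.

Lemma frontS_Ssimp n k (x : EG G n) :
  (k <= n)%N -> front k.+1 (Ssimp x) = Ssimp (front k x).
Proof.
move=> le_kn; apply: eq_EG => j.
by rewrite eg_fun_front // subSS /= eg_fun_front // -front_funS subnK.
Qed.

Lemma back0 n (x : EG G n.+1) : back 0 x = x.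
Proof. by apply: eq_EG => j; rewrite eg_fun_back. Qed.

Lemma backS_Ssimp n k (x : EG G n) :
  (k <= n)%N -> back k.+1 (Ssimp x) = back k x.
Proof.
move=> le_kn; apply: eq_EG => j.
by rewrite !eg_fun_back //= subnKC // face_fun0S //; apply: eg_top.
Qed.

End FrontBackFaces.

Section Chains.
Variable G : simplicial_group.

Lemma P0_Sch n (c : chain G n) : P 0 (Sch c) = e0_tens (Sch c).
Proof.
rewrite /P /e0_tens /Sch -!map_comp; apply: eq_map => -[a x] /=.
by rewrite front0_Ssimp back0.
Qed.

Lemma PS_Sch n k (c : chain G n) :
  (k <= n)%N -> P k.+1 (Sch c) = S_tens (P k c).
Proof.
move=> le_kn; rewrite /P /S_tens /Sch -!map_comp; apply: eq_map => -[a x] /=.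
by rewrite frontS_Ssimp // backS_Ssimp.
Qed.

Lemma AW_Sch n (c : chain G n) : AW (Sch c) = e0_tens (Sch c) ++ S_tens (AW c).
Proof.
have PS_iota : [seq P k.+1 (Sch c) | k <- iota 0 n.+1] =
               [seq S_tens (P k c) | k <- iota 0 n.+1].
  by apply/eq_in_map => k; rewrite mem_iota ltnS => le_kn; apply: PS_Sch.
rewrite /AW -[iota 0 n.+2]/(0 :: iota (1 + 0) n.+1) iotaDl map_cons P0_Sch -map_comp.
by rewrite [map _ _]PS_iota /S_tens map_flatten -map_comp.
Qed.

Lemma tensor_eq_catC (a b : tchain G) : tensor_eq (a ++ b) (b ++ a).
Proof. by move=> M f _; rewrite /teval !big_cat /= GRing.addrC. Qed.

End Chains.

Theorem lemma8p2 (G : simplicial_group) (n : nat) (c : chain G n) :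
  (* (i) *)
  (forall k, (k <= n.+1)%N ->
     tensor_eq (P k (Sch c))
       (match k with
        | 0 => e0_tens (Sch c)
        | k'.+1 => S_tens (P k' c)
        end)) /\
  (* (ii) *)
  tensor_eq (AW (Sch c)) (S_tens (AW c) ++ e0_tens (Sch c)).
Proof.
split=> [[|k] le_kn M f _|]; first by rewrite P0_Sch.
  by rewrite PS_Sch.
by rewrite AW_Sch; apply: tensor_eq_catC.
Qed.
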